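(* Let $\bar s$ be a positive half-integer and let $\mathcal D,\mathcal D'$ be even nonnegative integers. Let $\mathcal H^{RSOS}(\mathcal D;\mathcal D';\bar s)$ be the set of integer sequences $(a_0,a_1,\dots,a_{\mathcal D};b_0,b_1,\dots,b_{\mathcal D'})$ such that (i) $0\le a_i\le 2\bar s$ for all $i$ and $0\le b_j\le 2\bar s$ for all $j$; (ii) $\frac{a_{i+1}-a_i+2\bar s-1}{2}\in\{0,1,\dots,2\bar s-1\}$ for $0\le i\le\mathcal D-1$, and $\frac{b_{j+1}-b_j+1}{2}\in\{0,1\}$ for $0\le j\le \mathcal D'-1$; (iii) $2\bar s-2\le a_i+a_{i+1}\le 2\bar s+2$ for $0\le i\le \mathcal D-1$; (iv) $a_0=0$, $a_{\mathcal D}=b_0$ and $b_{\mathcal D'}=0$. Then the number of elements of $\mathcal H^{RSOS}(\mathcal D;\mathcal D';\bar s)$ equals $$\frac{2^{\mathcal D+\mathcal D'}}{\bar s+1}\sum_{q=1}^{2\bar s+1}\sin^2\!\Big(\frac{q\pi}{2\bar s+2}\Big)\cos^{\mathcal D+\mathcal D'}\!\Big(\frac{q\pi}{2\bar s+2}\Big),$$ with the convention $0^0=1$.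
   Context: This set describes paths of a generalized RSOS model with restriction parameter $2\bar s+2$ (heights $0,\dots,2\bar s$), whose first $\mathcal D$ steps have jump $2\bar s-1$ and last $\mathcal D'$ steps have jump $1$. *)

From HB Require Import structures.
From mathcomp Require Import all_boot all_order all_algebra.
From mathcomp Require Import all_classical all_reals all_analysis.
Set Implicit Arguments. Unset Strict Implicit. Unset Printing Implicit Defensive.
Import Order.TTheory GRing.Theory Num.Theory.
Local Open Scope ring_scope.

(* Throughout, n = 2 * sbar (a positive integer since sbar is a positive
   half-integer).  Heights are elements of 'I_n.+1 = {0,...,n}. *)

Definition zv (m : nat) (x : 'I_m) : int := (nat_of_ord x)%:Z.

Definition a_step (n : nat) (x y : int) : bool :=
  [exists k : 'I_n, y - x + n%:Z - 1 == 2 * (nat_of_ord k)%:Z].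

Definition b_step (x y : int) : bool :=
  [exists k : 'I_2, y - x + 1 == 2 * (nat_of_ord k)%:Z].

Definition HRSOS (n D D' : nat) :
  {set {ffun 'I_D.+1 -> 'I_n.+1} * {ffun 'I_D'.+1 -> 'I_n.+1}} :=
  [set ab | let a : {ffun 'I_D.+1 -> 'I_n.+1} := ab.1 in
           let b : {ffun 'I_D'.+1 -> 'I_n.+1} := ab.2 in
    [&& [forall i : 'I_D,
           a_step n (zv (a (inord i))) (zv (a (inord i.+1)))],
        [forall j : 'I_D',
           b_step (zv (b (inord j))) (zv (b (inord j.+1)))],
        [forall i : 'I_D,
           (n%:Z - 2 <= zv (a (inord i)) + zv (a (inord i.+1)))
           && (zv (a (inord i)) + zv (a (inord i.+1)) <= n%:Z + 2)],
        zv (a ord0) == 0,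
        zv (a ord_max) == zv (b ord0) &
        zv (b ord_max) == 0]].

(* Counting these sequences is counting walks.  An [a]-step x -> y is allowed exactly
   when y = n - x +- 1 and a [b]-step exactly when y = x +- 1, so #H is the (0,0) entry
   of (J P)^D P^D', where P is the adjacency matrix of the path graph on {0,...,n} and J
   reverses {0,...,n}.  J commutes with P and D is even, hence #H = (P^(D+D'))_00.  The
   vectors (sin (q (k+1) pi / (n+2)))_k, q = 1..n+1, are eigenvectors of P for the
   eigenvalues 2 cos (q pi / (n+2)), and the discrete sine orthogonality relations
   expand e_0 on them, which yields the closed formula. *)

From HB Require Import structures.
From mathcomp Require Import all_boot all_order all_algebra.
From mathcomp Require Import all_classical all_reals all_analysis.
From mathcomp Require Import ring lra zify.
Import Order.TTheory GRing.Theory Num.Theory.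
Local Open Scope ring_scope.


Section Trigonometry.
Variable R : realType.
Implicit Types a b t : R.

Lemma sin_addnpi (m : nat) t : sin (t + m%:R * pi) = (-1) ^+ m * sin t.
Proof.
elim: m => [|m IH]; first by rewrite mul0r addr0 expr0 mul1r.
by rewrite -addn1 natrD mulrDl mul1r addrA sinDpi IH exprD expr1 mulrN1 mulNr.
Qed.

Lemma sin_natpi (m : nat) : sin (m%:R * pi) = 0 :> R.
Proof. by rewrite -[_ * pi]add0r sin_addnpi sin0 mulr0. Qed.

Lemma cos_natpi (m : nat) : cos (m%:R * pi) = (-1) ^+ m :> R.
Proof.
have := sin_addnpi m (pi / 2).
by rewrite addrC sinDpihalf sin_pihalf mulr1.
Qed.

Lemma cosM_sin2 a t : cos a * (sin t *+ 2) = sin (a + t) - sin (a - t).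
Proof. by rewrite sinD sinB -mulr_natr; ring. Qed.

Lemma sinMsin a b : sin a * sin b = (cos (b - a) - cos (b + a)) / 2.
Proof. by rewrite cosB cosD; field. Qed.

(* Multiplying by [2 sin t], with [2 t = m pi / N], makes the sum telescope. *)
Lemma sum_cos_natpi (N m : nat) : (0 < m <= N)%N ->
  \sum_(1 <= q < N) cos (q%:R * (m%:R * pi / N%:R)) = - (1 + (-1) ^+ m) / 2 :> R.
Proof.
move=> /andP [m_gt0 m_le_N].
have N_gt0 : (0 < N)%N by apply: leq_trans m_le_N.
set t : R := m%:R * pi / N%:R / 2.
have t2 : m%:R * pi / N%:R = t *+ 2 by rewrite /t -[_ *+ 2]mulr_natr divfK.
have sin_t_gt0 : 0 < sin t.
  apply: sin_gt0_pi; apply/andP; split.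
    by rewrite /t !divr_gt0 ?mulr_gt0 ?pi_gt0 ?ltr0n.
  rewrite /t ltr_pdivrMr // ltr_pdivrMr ?ltr0n // mulrC -mulrA ltr_pM2l ?pi_gt0 //.
  by rewrite -natrM ltr_nat; lia.
pose u (k : nat) := sin (k%:R * (t *+ 2) - t).
have telescope : \sum_(1 <= q < N) cos (q%:R * (t *+ 2)) * (sin t *+ 2) = u N - u 1%N.
  apply: telescope_sumr_eq => // k _.
  rewrite /u cosM_sin2 -[k.+1]addn1 natrD mulrDl mul1r mulr2n; congr (sin _ - _).
  ring.
have uN : u N = - (-1) ^+ m * sin t.
  rewrite /u; have -> : N%:R * (t *+ 2) = m%:R * pi.
    by rewrite -t2 mulrC divfK // pnatr_eq0 -lt0n.
  by rewrite sinB sin_natpi mul0r add0r cos_natpi mulNr.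
have u1 : u 1%N = sin t by rewrite /u mul1r mulr2n addrK.
move: telescope; rewrite -big_distrl /= uN u1 t2 => telescope.
apply: (@mulIf _ (sin t *+ 2)); first by rewrite mulrn_eq0 /= gt_eqF.
by rewrite telescope -mulr_natr; field.
Qed.

Definition sin_mode (N q k : nat) : R := sin (q%:R * (k%:R * pi / N%:R)).

Lemma sin_mode0 N q : sin_mode N q 0 = 0.
Proof. by rewrite /sin_mode !mul0r mulr0 sin0. Qed.

Lemma sin_modeN N q : (0 < N)%N -> sin_mode N q N = 0.
Proof.
by move=> N_gt0; rewrite /sin_mode mulrAC divff ?mul1r ?sin_natpi ?pnatr_eq0 -?lt0n.
Qed.

Lemma sin_modeSS N q k :
  sin_mode N q k + sin_mode N q k.+2 = cos (q%:R * pi / N%:R) *+ 2 * sin_mode N q k.+1.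
Proof.
rewrite /sin_mode -[k.+2]addn1 -[k.+1]addn1 !natrD.
set x := q%:R * pi / N%:R.
have -> : q%:R * (k%:R * pi / N%:R) = q%:R * ((k%:R + 1) * pi / N%:R) - x by rewrite /x; ring.
have -> : q%:R * ((k%:R + 1 + 1) * pi / N%:R) = q%:R * ((k%:R + 1) * pi / N%:R) + x.
  by rewrite /x; ring.
by rewrite sinB sinD -mulr_natr; ring.
Qed.

Lemma sum_sin_mode1M (n x : nat) : (x <= n)%N ->
  \sum_(1 <= q < n.+2) sin_mode n.+2 q 1 * sin_mode n.+2 q x.+1
    = (x == 0%N)%:R * n.+2%:R / 2.
Proof.
move=> x_le_n; set N := n.+2.
have prod_diff q : sin_mode N q 1 * sin_mode N q x.+1 =
   (cos (q%:R * (x%:R * pi / N%:R)) - cos (q%:R * (x.+2%:R * pi / N%:R))) / 2.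
  rewrite /sin_mode sinMsin -[x.+2]addn2 -[x.+1]addn1 !natrD.
  by congr ((cos _ - cos _) / 2); ring.
under eq_bigr do rewrite prod_diff.
rewrite -big_distrl /= sumrB (@sum_cos_natpi N x.+2); last by rewrite /N; lia.
case: x x_le_n {prod_diff} => [|x] x_le_n.
  under eq_bigr do rewrite mul0r mul0r mulr0 cos0.
  rewrite sumr_const_nat /= expr2 mulrN1 opprK /N subn1 /= -[n.+2%:R]natr1.
  by rewrite -[n.+1%:R]natr1; field.
rewrite (@sum_cos_natpi N x.+1); last by rewrite /N; lia.
by rewrite -[x.+3]addn2 exprD expr2 mulN1r opprK mulr1 subrr !mul0r.
Qed.

End Trigonometry.

Definition walkb {T : finType} {L : nat} (e : rel T) (f : {ffun 'I_L.+1 -> T}) : bool :=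
  [forall i : 'I_L, e (f (inord i)) (f (inord i.+1))].

Definition ffun_rcons {T : finType} {L : nat} (g : {ffun 'I_L.+1 -> T}) (t : T) :
  {ffun 'I_L.+2 -> T} := [ffun i => if unlift ord_max i is Some j then g j else t].

Section WalkExtension.
Variables (T : finType) (L : nat) (g : {ffun 'I_L.+1 -> T}) (t : T).

Lemma ffun_rcons_lift j : ffun_rcons g t (lift ord_max j) = g j.
Proof. by rewrite ffunE liftK. Qed.

Lemma ffun_rcons_max : ffun_rcons g t ord_max = t.
Proof. by rewrite ffunE unlift_none. Qed.

Lemma ffun_rcons0 : ffun_rcons g t ord0 = g ord0.
Proof. by rewrite -(ffun_rcons_lift ord0); congr (ffun_rcons g t _); apply: val_inj. Qed.

Lemma ffun_rcons_inord k : (k <= L)%N -> ffun_rcons g t (inord k) = g (inord k).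
Proof.
move=> le_kL; rewrite -ffun_rcons_lift; congr (ffun_rcons g t _); apply: val_inj.
rewrite /= /bump !inordK; lia.
Qed.

Lemma ffun_rcons_inordS : ffun_rcons g t (inord L.+1) = t.
Proof.
by rewrite -[RHS]ffun_rcons_max; congr (ffun_rcons g t _); apply: val_inj; rewrite /= inordK.
Qed.

Lemma walkb_rcons (e : rel T) : walkb e (ffun_rcons g t) = walkb e g && e (g ord_max) t.
Proof.
have inord_max : (inord L : 'I_L.+1) = ord_max by apply: val_inj; rewrite /= inordK.
apply/forallP/andP => [walk_ext | [/forallP walk_g e_last] i].
  split; last first.
    by have := walk_ext ord_max; rewrite /= ffun_rcons_inord // ffun_rcons_inordS inord_max.
  apply/forallP => i; have := walk_ext (widen_ord (leqnSn _) i).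
  by rewrite /= !ffun_rcons_inord //; move: (ltn_ord i); lia.
case: (ltnP i L) => [lt_iL | le_Li].
  have := walk_g (Ordinal lt_iL).
  by rewrite /= !ffun_rcons_inord //; move: (ltn_ord i); lia.
have -> : (i : nat) = L by move: (ltn_ord i); lia.
by rewrite ffun_rcons_inord // ffun_rcons_inordS inord_max.
Qed.

End WalkExtension.

Section FfunSums.
Variables (V : nmodType) (T : finType).

Lemma sum_ffun1 (F : {ffun 'I_1 -> T} -> V) : \sum_f F f = \sum_(t : T) F [ffun => t].
Proof.
rewrite (reindex (fun t : T => [ffun => t])) //=.
exists (fun f : {ffun 'I_1 -> T} => f ord0); first by move=> t _; rewrite ffunE.
by move=> f _; apply/ffunP => i; rewrite ffunE (ord1 i).
Qed.

Lemma sum_ffunS (L : nat) (F : {ffun 'I_L.+2 -> T} -> V) :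
  \sum_f F f = \sum_(g : {ffun 'I_L.+1 -> T}) \sum_(t : T) F (ffun_rcons g t).
Proof.
rewrite pair_bigA /= (reindex (fun p => ffun_rcons p.1 p.2)) //=.
exists (fun f => ([ffun j => f (lift ord_max j)], f ord_max)).
  move=> [g t] _ /=; rewrite ffun_rcons_max; congr (_, _).
  by apply/ffunP => j; rewrite ffunE ffun_rcons_lift.
move=> f _ /=; apply/ffunP => i; rewrite ffunE.
by case: unliftP => [j ->|->]; rewrite ?ffunE.
Qed.

End FfunSums.

Definition relmx (R : pzSemiRingType) {m : nat} (e : rel 'I_m.+1) : 'M[R]_m.+1 :=
  \matrix_(i, j) (e i j)%:R.

Lemma sum_walks_relmx_pow (R : pzSemiRingType) (m L : nat) (e : rel 'I_m.+1) (x y : 'I_m.+1) :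
  \sum_(f : {ffun 'I_L.+1 -> 'I_m.+1}) ([&& f ord0 == x, walkb e f & f ord_max == y])%:R
  = (relmx R e ^+ L) x y.
Proof.
elim: L y => [|L IH] y.
  have walk1 t : walkb e ([ffun => t] : {ffun 'I_1 -> _}) by apply/forallP => [[]].
  rewrite sum_ffun1 expr0 mxE.
  under eq_bigr do rewrite !ffunE walk1.
  by rewrite (bigD1 x) //= big1 ?addr0 ?eqxx // => t /negbTE ->.
rewrite sum_ffunS exprSr -mulmxE mxE.
under [RHS]eq_bigr do rewrite -IH mulr_suml.
rewrite [RHS]exchange_big /=; apply: eq_bigr => g _.
rewrite (bigD1 y) //= big1 ?addr0; last first.
  by move=> t /negbTE ne_ty; rewrite ffun_rcons0 walkb_rcons ffun_rcons_max ne_ty !andbF.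
rewrite (bigD1 (g ord_max)) //= big1 ?addr0; last first.
  by move=> t ne_t; rewrite [g ord_max == t]eq_sym (negbTE ne_t) !andbF mul0r.
rewrite ffun_rcons0 walkb_rcons ffun_rcons_max !eqxx !mxE.
by rewrite !andbT -natrM mulnb andbA.
Qed.

Lemma relmx_rev_sqr (R : pzSemiRingType) {m : nat} {e : rel 'I_m.+1} :
  (forall x y, e (rev_ord x) (rev_ord y) = e x y) ->
  relmx R (fun x y => e (rev_ord x) y) ^+ 2 = relmx R e ^+ 2.
Proof.
move=> e_rev; rewrite !expr2 -!mulmxE; apply/matrixP => i k; rewrite !mxE.
rewrite (reindex_inj (@rev_ord_inj m.+1)) /=.
by apply: eq_bigr => j _; rewrite !mxE rev_ordK e_rev.
Qed.

Definition path_nbr {n : nat} (i j : 'I_n.+1) : bool :=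
  (j == i.+1 :> nat) || (i == j.+1 :> nat).

Lemma path_nbr_rev n (i j : 'I_n.+1) : path_nbr (rev_ord i) (rev_ord j) = path_nbr i j.
Proof.
rewrite /path_nbr /=; have := ltn_ord i; have := ltn_ord j => lt_j lt_i.
by apply/idP/idP => /orP [] /eqP eq_ij; apply/orP; [right|left|right|left]; apply/eqP; lia.
Qed.

Definition path_adj (R : pzSemiRingType) (n : nat) : 'M[R]_n.+1 := relmx R (@path_nbr n).

Lemma path_nbrE (R : pzSemiRingType) n (i j : 'I_n.+1) :
  (path_nbr i j)%:R = ((j : nat) == i.+1)%:R + ((i : nat) == j.+1)%:R :> R.
Proof.
rewrite /path_nbr; case: (eqVneq (j : nat) i.+1) => [->|_]; last by rewrite add0r.
by rewrite ltn_eqF ?addr0.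
Qed.

Lemma sum_ord_eqM (R : pzSemiRingType) (N k : nat) (g : nat -> R) :
  \sum_(j < N) ((j : nat) == k)%:R * g j = (k < N)%:R * g k.
Proof.
rewrite (_ : _ * g k = if (k < N)%N then g k else 0); last by case: ifP; rewrite ?mul1r ?mul0r.
rewrite -(big_ord1_eq +%R) [RHS]big_mkcond; apply: eq_bigr => j _.
by case: eqP; rewrite ?mul1r ?mul0r.
Qed.

Section PathGraphSpectrum.
Variable R : realType.

Definition path_eigvec (n q : nat) : 'cV[R]_n.+1 := \col_i sin_mode R n.+2 q i.+1.

Definition path_eigval (n q : nat) : R := cos (q%:R * pi / n.+2%:R) *+ 2.

(* The boundary values [sin_mode _ _ 0 = sin_mode _ _ n.+2 = 0] absorb the missing
   neighbours at both ends of the path. *)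
Lemma path_adj_eigen n q :
  path_adj R n *m path_eigvec n q = path_eigval n q *: path_eigvec n q.
Proof.
apply/matrixP => i j; rewrite !mxE.
under eq_bigr do rewrite !mxE path_nbrE mulrDl.
rewrite big_split /= (sum_ord_eqM _ _ _ (fun k => sin_mode R n.+2 q k.+1)).
case: i => [[|i] lt_i] /=.
  rewrite big1 ?addr0; last by move=> k _; rewrite mul0r.
  rewrite /path_eigval -sin_modeSS sin_mode0 add0r.
  by case: n lt_i => [|n] _ /=; [rewrite mul0r sin_modeN | rewrite mul1r].
under eq_bigr do rewrite eqSS eq_sym.
rewrite (sum_ord_eqM _ _ _ (fun k => sin_mode R n.+2 q k.+1)).
have lt_i_n1 : (i < n.+1)%N by lia.
rewrite lt_i_n1 mul1r addrC /path_eigval -sin_modeSS.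
case: (ltnP i.+2 n.+1) => [_|le_n_i]; first by rewrite mul1r.
have -> : i.+3 = n.+2 by lia.
by rewrite mul0r sin_modeN ?addr0.
Qed.

Lemma path_adj_pow_eigen n q L :
  path_adj R n ^+ L *m path_eigvec n q = path_eigval n q ^+ L *: path_eigvec n q.
Proof.
elim: L => [|L IH]; first by rewrite expr0 scale1r mul1mx.
by rewrite exprS -mulmxE -mulmxA IH -scalemxAr path_adj_eigen scalerA exprSr.
Qed.

Lemma delta0_eigen_expansion n :
  (\col_i (i == ord0)%:R : 'cV[R]_n.+1) =
  \sum_(1 <= q < n.+2) (2 / n.+2%:R * sin_mode R n.+2 q 1) *: path_eigvec n q.
Proof.
apply/matrixP => i j; rewrite summxE !mxE.
under eq_bigr do rewrite !mxE -mulrA.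
rewrite -big_distrr /= sum_sin_mode1M; last by rewrite -ltnS.
by rewrite (_ : (i == ord0) = ((i : nat) == 0%N)) //; field.
Qed.

Lemma path_adj_pow00 n L : (path_adj R n ^+ L) ord0 ord0 =
  \sum_(1 <= q < n.+2) 2 / n.+2%:R * sin_mode R n.+2 q 1 ^+ 2 * path_eigval n q ^+ L.
Proof.
have -> : (path_adj R n ^+ L) ord0 ord0 = (path_adj R n ^+ L *m \col_i (i == ord0)%:R) ord0 0.
  rewrite !mxE (bigD1 ord0) //= big1 ?addr0; first by rewrite mxE eqxx mulr1.
  by move=> k ne_k0; rewrite mxE (negbTE ne_k0) mulr0.
rewrite delta0_eigen_expansion mulmx_sumr summxE; apply: eq_bigr => q _.
by rewrite -scalemxAr path_adj_pow_eigen !mxE; ring.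
Qed.

End PathGraphSpectrum.

Definition a_rel (n : nat) : rel 'I_n.+1 := fun x y =>
  a_step n (zv x) (zv y) && ((n%:Z - 2 <= zv x + zv y) && (zv x + zv y <= n%:Z + 2)).

Definition b_rel (n : nat) : rel 'I_n.+1 := fun x y => b_step (zv x) (zv y).

Lemma b_rel_path_nbr n (x y : 'I_n.+1) : b_rel n x y = path_nbr x y.
Proof.
rewrite /b_rel /b_step /path_nbr /zv.
apply/existsP/orP => [[[[|[|k]] lt_k2]] //= /eqP step | [] /eqP step].
- by right; apply/eqP; lia.
- by left; apply/eqP; lia.
- by exists (@Ordinal 2 1 isT); apply/eqP => /=; lia.
- by exists (@Ordinal 2 0 isT); apply/eqP => /=; lia.
Qed.

(* Jumps of an odd size [<= n - 1] with [n - 2 <= x + y <= n + 2] leave only the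
   two moves [y = n - x +- 1]: a walk on the path graph composed with reversal. *)
Lemma a_rel_path_nbr n (x y : 'I_n.+1) : a_rel n x y = path_nbr (rev_ord x) y.
Proof.
rewrite /a_rel /a_step /path_nbr /zv /=.
have := ltn_ord x; have := ltn_ord y => lt_y lt_x.
apply/idP/idP => [/andP [/existsP [k /eqP step] /andP [lo hi]] | /orP [] /eqP move].
  have := ltn_ord k => lt_k.
  have [sum_eq | sum_eq] : (x + y = n.+1)%N \/ (x + y + 1 = n)%N by lia.
    by apply/orP; left; apply/eqP; lia.
  by apply/orP; right; apply/eqP; lia.
- have lt_k : (y.-1 < n)%N by lia.
  apply/andP; split; last by apply/andP; split; lia.
  by apply/existsP; exists (Ordinal lt_k); apply/eqP => /=; lia.
- have lt_k : (y < n)%N by lia.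
  apply/andP; split; last by apply/andP; split; lia.
  by apply/existsP; exists (Ordinal lt_k); apply/eqP => /=; lia.
Qed.

Lemma zv_eq {m} (x y : 'I_m) : (zv x == zv y) = (x == y).
Proof. by rewrite /zv eqz_nat. Qed.

Lemma in_HRSOS n D D' a b : ((a, b) \in HRSOS n D D') =
  [&& walkb (a_rel n) a, walkb (b_rel n) b, a ord0 == ord0,
      a ord_max == b ord0 & b ord_max == ord0].
Proof.
have walk_a : walkb (a_rel n) a =
    [forall i : 'I_D, a_step n (zv (a (inord i))) (zv (a (inord i.+1)))] &&
    [forall i : 'I_D, (n%:Z - 2 <= zv (a (inord i)) + zv (a (inord i.+1)))
                      && (zv (a (inord i)) + zv (a (inord i.+1)) <= n%:Z + 2)].
  apply/forallP/andP => [walk | [/forallP steps /forallP bounds] i].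
    by split; apply/forallP => i; have /andP [] := walk i.
  by rewrite /a_rel steps bounds.
have zv_eq0 m (x : 'I_m.+1) : (zv x == 0) = (x == ord0) := zv_eq x ord0.
rewrite inE /= walk_a !zv_eq0 zv_eq.
by rewrite /walkb /b_rel -andbA; congr (_ && _); rewrite andbCA.
Qed.

Section Counting.
Variable R : pzSemiRingType.

Lemma card_HRSOS_sum n D D' :
  #|HRSOS n D D'|%:R =
  \sum_(y : 'I_n.+1)
    (\sum_(a : {ffun 'I_D.+1 -> 'I_n.+1})
       ([&& a ord0 == ord0, walkb (a_rel n) a & a ord_max == y])%:R) *
    (\sum_(b : {ffun 'I_D'.+1 -> 'I_n.+1})
       ([&& b ord0 == y, walkb (b_rel n) b & b ord_max == ord0])%:R) :> R.
Proof.
have -> : #|HRSOS n D D'|%:R = \sum_a \sum_b (if (a, b) \in HRSOS n D D' then 1 else 0 : R).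
  by rewrite pair_bigA /= -sum1_card natr_sum big_mkcond; apply: eq_bigr => [[a b]].
under [RHS]eq_bigr do rewrite mulr_suml.
rewrite [RHS]exchange_big; apply: eq_bigr => a _.
under [RHS]eq_bigr do rewrite mulr_sumr.
rewrite [RHS]exchange_big; apply: eq_bigr => b _.
rewrite (bigD1 (a ord_max)) //= big1 ?addr0; last first.
  by move=> y ne_y; rewrite [a ord_max == y]eq_sym (negbTE ne_y) !andbF mul0r.
rewrite in_HRSOS eqxx [b ord0 == a ord_max]eq_sym -natrM mulnb !andbT.
by case: (walkb _ a); case: (walkb _ b); case: (a ord0 == ord0);
  case: (a ord_max == b ord0); case: (b ord_max == ord0).
Qed.

Lemma card_HRSOS_relmx n D D' :
  #|HRSOS n D D'|%:R = (relmx R (a_rel n) ^+ D *m relmx R (b_rel n) ^+ D') ord0 ord0.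
Proof.
by rewrite card_HRSOS_sum mxE; apply: eq_bigr => y _; rewrite !sum_walks_relmx_pow.
Qed.

Lemma card_HRSOS_path_adj n D D' : ~~ odd D ->
  #|HRSOS n D D'|%:R = (path_adj R n ^+ (D + D')) ord0 ord0.
Proof.
move=> D_even.
have a_adj_sqr : relmx R (a_rel n) ^+ 2 = path_adj R n ^+ 2.
  rewrite /path_adj -(relmx_rev_sqr R (path_nbr_rev n)); congr (_ ^+ 2).
  by apply/matrixP => i j; rewrite !mxE a_rel_path_nbr.
have b_adj : relmx R (b_rel n) = path_adj R n.
  by apply/matrixP => i j; rewrite !mxE b_rel_path_nbr.
rewrite card_HRSOS_relmx -(odd_double_half D) (negbTE D_even) add0n -mul2n.
by rewrite mulmxE exprM a_adj_sqr b_adj -exprM -exprD.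
Qed.

End Counting.

Theorem proposition6p1 (R : realType) (n D D' : nat) (hn : (0 < n)%N)
    (hD : ~~ odd D) (hD' : ~~ odd D') :
  let sbar : R := n%:R / 2 in
  (#|HRSOS n D D'|)%:R =
    (2 ^+ (D + D')) / (sbar + 1) *
    \sum_(1 <= q < n.+2)
      (sin (q%:R * pi / (2 * sbar + 2))) ^+ 2 *
      (cos (q%:R * pi / (2 * sbar + 2))) ^+ (D + D').
Proof.
move=> sbar.
have -> : 2 * sbar + 2 = n.+2%:R by rewrite /sbar -[n.+2]addn2 natrD; field.
have -> : sbar + 1 = n.+2%:R / 2 by rewrite /sbar -[n.+2]addn2 natrD; field.
rewrite card_HRSOS_path_adj // path_adj_pow00 mulr_sumr; apply: eq_bigr => q _.
rewrite /sin_mode /path_eigval mul1r mulrA -[cos _ *+ 2]mulr_natl exprMn.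
by field; rewrite -natrD pnatr_eq0.
Qed.
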